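(* Let $F$ be a field, $n\ge1$, and $a\in\mathrm{M}_n(F)$. Then: (i) there exists $g\in\mathrm{GL}_n(F)$ with (1) $gag^{-1}={}^{\top}a$ and (2) ${}^{\top}g=g$; (ii) if the minimal polynomial and the characteristic polynomial of $a$ coincide (equivalently, the $F[X]$-module $V_a$ is cyclic), then every $g\in\mathrm{GL}_n(F)$ satisfying (1) also satisfies (2); (iii) if the minimal and characteristic polynomials of $a$ differ (equivalently, $V_a$ is not cyclic), then there exists $g\in\mathrm{GL}_n(F)$ satisfying (1) but not (2).
   Context: ${}^{\top}$ denotes matrix transpose. $V_a$ denotes $V=F^n$ (column vectors) with the $F[X]$-module structure $f(X)v=f(a)v$. *)

From HB Require Import structures.
From mathcomp Require Import all_boot all_order all_algebra.
Set Implicit Arguments. Unset Strict Implicit. Unset Printing Implicit Defensive.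
Import GRing.Theory.
Local Open Scope ring_scope.

From HB Require Import structures.
From mathcomp Require Import all_boot all_order all_algebra.
From mathcomp Require Import fingroup perm zify.
From Stdlib Require Import Classical.
Set Implicit Arguments. Unset Strict Implicit. Unset Printing Implicit Defensive.
Import GRing.Theory.
Local Open Scope ring_scope.

(* For a : 'M[F]_n, call g an intertwiner if g a = a^T g; for invertible g this
   is g a g^-1 = a^T.

   The module V_a is studied through annihilators: using irreducible factors
   we find a vector v whose annihilator is the minimal polynomial.  Its Krylov
   matrix K spans a cyclic summand; a functional phi dual to the last Krylov
   vector gives a dual Krylov matrix Lt whose common kernel N is an a-stable
   complement of K, and the pairing H = K Lt^T is an invertible symmetric
   Hankel matrix intertwining a on K with a^T.  Conjugating by the basis
   col_mx K N reduces (i) to block-triangular intertwiners and induction on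
   the size of N; in (iii) N is nonzero and any nonzero homomorphism from N
   to K fills the off-diagonal block.  (ii) holds because in a cyclic basis
   for a^T every intertwiner becomes a Hankel, hence symmetric, matrix. *)

Section PolyFactor.
Variable F : fieldType.
Implicit Types r s t : {poly F}.

(* Every non-constant polynomial has an irreducible divisor (classical, since
   irreducibility is not decidable over an arbitrary field). *)
Lemma irreducible_factor s :
  (1 < size s)%N -> exists2 r, irreducible_poly r & r %| s.
Proof.
have [k] := ubnP (size s); elim: k s => // k IHk s le_s_k s_gt1.
have [[q /and3P [q_neq1 q_s q_ns]] | no_proper_div] :=
  classic (exists q : {poly F}, [&& size q != 1%N, q %| s & ~~ (q %= s)]);
  last first.
  exists s => //; split=> // q q_neq1 q_s; apply/negPn/negP => q_ns.
  by apply: no_proper_div; exists q; rewrite q_neq1 q_s q_ns.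
have s_neq0 : s != 0 by rewrite -size_poly_gt0 ltnW.
have q_neq0 : q != 0.
  by apply: contraNneq s_neq0 => q0; move: q_s; rewrite q0 dvd0p.
have lt_qs : (size q < size s)%N.
  by rewrite ltn_neqAle (dvdp_leq s_neq0 q_s) andbT (dvdp_size_eqp q_s).
have q_gt1 : (1 < size q)%N by rewrite ltn_neqAle eq_sym q_neq1 size_poly_gt0.
have [r irr_r r_q] := IHk q (leq_trans lt_qs le_s_k) q_gt1.
by exists r => //; apply: dvdp_trans r_q q_s.
Qed.

Lemma power_split s r : s != 0 -> (1 < size r)%N ->
  exists j t, s = r ^+ j * t /\ ~~ (r %| t).
Proof.
move=> + r_gt1; have [k] := ubnP (size s); elim: k s => // k IHk s le_s_k s_neq0.
have [r_s|] := boolP (r %| s); last by exists 0%N, s; rewrite expr0 mul1r.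
have [t def_s] : exists t : {poly F}, s = t * r by apply/dvdpP.
have r_neq0 : r != 0 by rewrite -size_poly_gt0 ltnW.
have t_neq0 : t != 0 by apply: contraNneq s_neq0 => t0; rewrite def_s t0 mul0r.
have lt_t_k : (size t < k)%N.
  rewrite -ltnS (leq_trans _ le_s_k) // ltnS def_s size_mul //.
  by rewrite -ltnS prednK ?addn_gt0 ?size_poly_gt0 ?t_neq0 // -addn2 leq_add2l.
have [j [u [def_t r_u]]] := IHk _ lt_t_k t_neq0.
by exists j.+1, u; rewrite def_s def_t mulrC mulrA -exprS.
Qed.

End PolyFactor.

Section Annihilators.
Variables (F : fieldType) (n : nat).
Implicit Types (a : 'M[F]_n.+1) (v w : 'rV[F]_n.+1) (p q s t : {poly F}).

(* [ann_gen a v s]: the polynomials q with v q(a) = 0 are exactly the multiples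
   of s, i.e. s generates the annihilator of v in the F[X]-module V_a. *)
Definition ann_gen a v s := forall q, (v *m horner_mx a q == 0) = (s %| q).

Lemma mulmx_hornerM a v p q :
  v *m horner_mx a (p * q) = v *m horner_mx a p *m horner_mx a q.
Proof. by rewrite rmorphM /= -mulmxE mulmxA. Qed.

Lemma ann_dvd a v p q :
  v *m horner_mx a p = 0 -> p %| q -> v *m horner_mx a q = 0.
Proof. by move=> vp /dvdpP [c ->]; rewrite mulrC mulmx_hornerM vp mul0mx. Qed.

Lemma ann_coprime a v p q : coprimep p q ->
  v *m horner_mx a p = 0 -> v *m horner_mx a q = 0 -> v = 0.
Proof.
case/Bezout_eq1_coprimepP=> [[u1 u2] /= Bezout] vp vq.
have: v *m horner_mx a 1 = 0.
  rewrite -Bezout rmorphD /= mulmxDr (ann_dvd vp (dvdp_mull _ (dvdpp _))).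
  by rewrite (ann_dvd vq (dvdp_mull _ (dvdpp _))) addr0.
by rewrite rmorph1 mulmx1.
Qed.

Lemma ann_sum_coprime a v w s t q : coprimep s t ->
  v *m horner_mx a s = 0 -> w *m horner_mx a t = 0 ->
  (v + w) *m horner_mx a q = 0 -> v *m horner_mx a q = 0.
Proof.
move=> st vs wt /eqP; rewrite mulmxDl addr_eq0 => /eqP vq.
apply: (ann_coprime (a := a) st).
  by rewrite -mulmx_hornerM mulrC (ann_dvd vs (dvdp_mulr _ (dvdpp _))).
rewrite vq mulNmx -mulmx_hornerM mulrC.
by rewrite (ann_dvd wt (dvdp_mulr _ (dvdpp _))) oppr0.
Qed.

Lemma ann_gen_add a v w s t : coprimep s t ->
  ann_gen a v s -> ann_gen a w t -> ann_gen a (v + w) (s * t).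
Proof.
move=> st vs wt q; rewrite Gauss_dvdp // -vs -wt.
have vs0 : v *m horner_mx a s = 0 by apply/eqP; rewrite vs.
have wt0 : w *m horner_mx a t = 0 by apply/eqP; rewrite wt.
apply/eqP/andP => [vwq | [/eqP vq /eqP wq]]; last by rewrite mulmxDl vq wq addr0.
split; apply/eqP; first exact: ann_sum_coprime st vs0 wt0 vwq.
by apply: ann_sum_coprime (wt0) (vs0) _; rewrite 1?coprimep_sym // addrC.
Qed.

End Annihilators.

Lemma nonzero_mx_row (F : fieldType) m k (M : 'M[F]_(m, k)) :
  M != 0 -> exists y : 'rV_m, y *m M != 0.
Proof.
move=> M_nz; have /existsP [i row_i] : [exists i, row i M != 0].
  apply: contraNT M_nz => /existsPn rows0; apply/eqP/row_matrixP => i.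
  by rewrite row0; apply/eqP/negPn/rows0.
by exists (delta_mx 0 i); rewrite -rowE.
Qed.

Section CyclicVector.
Variables (F : fieldType) (n : nat) (a : 'M[F]_n.+1).

Lemma ann_gen_irr_power r j : irreducible_poly r -> r ^+ j %| mxminpoly a ->
  exists v, ann_gen a v (r ^+ j).
Proof.
move=> irr_r; case: j => [|j] rj_p.
  by exists 0 => q; rewrite mul0mx eqxx dvd1p.
have r_gt1 : (1 < size r)%N := irr_r.1.
have p_neq0 : mxminpoly a != 0 by rewrite monic_neq0 ?mxminpoly_monic.
set c := mxminpoly a %/ r ^+ j.+1.
have def_p : mxminpoly a = c * r ^+ j.+1 by rewrite divpK.
have c_neq0 : c != 0 by apply: contraNneq p_neq0 => c0; rewrite def_p c0 mul0r.
have [y y_nz] : exists y : 'rV_n.+1, y *m horner_mx a (c * r ^+ j) != 0.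
  apply: nonzero_mx_row; rewrite -dvd_mxminpoly def_p exprSr mulrA.
  have crj_neq0 : c * r ^+ j != 0.
    by rewrite mulf_neq0 // expf_neq0 // irredp_neq0.
  by rewrite -[X in _ %| X]mulr1 dvdp_mul2l // dvdp1 neq_ltn r_gt1 orbT.
have vrj0 : y *m horner_mx a c *m horner_mx a (r ^+ j.+1) = 0.
  by rewrite -mulmx_hornerM -def_p mx_root_minpoly mulmx0.
exists (y *m horner_mx a c) => q; apply/eqP/idP => [vq|]; last exact: ann_dvd vrj0.
apply/negPn/negP => not_dvd.
have q_neq0 : q != 0 by apply: contraNneq not_dvd => ->; rewrite dvdp0.
have [i [t [def_q r_t]]] := power_split q_neq0 r_gt1.
have le_ij : (i <= j)%N.
  rewrite leqNgt; apply: contra not_dvd => lt_ji.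
  by rewrite def_q dvdp_mulr ?dvdp_exp2l.
have vri0 : y *m horner_mx a c *m horner_mx a (r ^+ i) = 0.
  apply: (ann_coprime (a := a) (p := t) (q := r ^+ (j.+1 - i))).
  - by rewrite coprimep_pexpr ?subn_gt0 // coprimep_sym irreducible_poly_coprime.
  - by rewrite -mulmx_hornerM -def_q.
  by rewrite -!mulmx_hornerM -exprD subnKC 1?ltnW // mulmx_hornerM.
move/eqP: y_nz; apply.
by rewrite mulmx_hornerM (ann_dvd vri0 (dvdp_exp2l _ le_ij)).
Qed.

(* Every divisor of the minimal polynomial is the annihilator of a vector:
   split off an irreducible power and glue coprime parts. *)
Lemma ann_gen_exists s : s %| mxminpoly a -> exists v, ann_gen a v s.
Proof.
have [k] := ubnP (size s); elim: k s => // k IHk s le_s_k s_p.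
have s_neq0 : s != 0.
  by apply: contraTneq s_p => ->; rewrite dvd0p monic_neq0 ?mxminpoly_monic.
have [s_le1 | s_gt1] := leqP (size s) 1.
  have s_unit : s %= 1.
    by rewrite -size_poly_eq1 eqn_leq s_le1 size_poly_gt0.
  by exists 0 => q; rewrite mul0mx eqxx (eqp_dvdl _ s_unit) dvd1p.
have [r irr_r r_s] := irreducible_factor s_gt1.
have [j [t [def_s r_t]]] := power_split s_neq0 irr_r.1.
have t_s : t %| s by rewrite def_s dvdp_mull.
have lt_t_k : (size t < k)%N.
  rewrite -ltnS (leq_trans _ le_s_k) // ltnS ltn_neqAle.
  rewrite (dvdp_leq s_neq0 t_s) andbT.
  by rewrite (dvdp_size_eqp t_s); apply: contra r_t => /eqp_dvdr ->.
have [vt vt_t] := IHk t lt_t_k (dvdp_trans t_s s_p).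
have rj_p : r ^+ j %| mxminpoly a by apply: dvdp_trans s_p; rewrite def_s dvdp_mulr.
have [vr vr_r] := ann_gen_irr_power irr_r rj_p.
exists (vt + vr); rewrite def_s mulrC; apply: ann_gen_add vt_t vr_r.
by rewrite coprimep_expr // coprimep_sym irreducible_poly_coprime.
Qed.

Lemma cyclic_vector : exists v, ann_gen a v (mxminpoly a).
Proof. exact: ann_gen_exists (dvdpp _). Qed.

End CyclicVector.

Section Transpose.
Variables (F : fieldType) (n : nat).
Implicit Types (b : 'M[F]_n.+1) (p : {poly F}).

Lemma trmxX b k : (b ^+ k)^T = b^T ^+ k.
Proof.
elim: k => [|k IHk]; first by rewrite !expr0 trmx1.
by rewrite exprS -mulmxE trmx_mul IHk mulmxE -exprSr.
Qed.

Lemma horner_mx_tr b p : horner_mx b^T p = (horner_mx b p)^T.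
Proof.
elim/poly_ind: p => [|p c IHp]; first by rewrite !rmorph0 trmx0.
rewrite !rmorphD !rmorphM /= !horner_mx_X !horner_mx_C IHp -!mulmxE linearD /=.
by rewrite trmx_mul tr_scalar_mx -!trmx_mul (comm_mx_horner p (comm_mx_refl b)).
Qed.

Lemma mxminpoly_tr b : mxminpoly b^T = mxminpoly b.
Proof.
apply/eqP; rewrite -eqp_monic ?mxminpoly_monic //; apply/andP.
split; apply: mxminpoly_min; first by rewrite horner_mx_tr mx_root_minpoly trmx0.
by apply: trmx_inj; rewrite -horner_mx_tr mx_root_minpoly trmx0.
Qed.

Lemma intertwinerX (a g : 'M[F]_n.+1) k :
  g *m a = a^T *m g -> g *m a ^+ k = a^T ^+ k *m g.
Proof.
move=> ga; elim: k => [|k IHk]; first by rewrite !expr0 mul1mx mulmx1.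
by rewrite !exprSr -!mulmxE mulmxA IHk -mulmxA ga mulmxA.
Qed.

End Transpose.

Definition krylov (F : fieldType) k (u : 'rV[F]_k) (b : 'M[F]_k) d : 'M[F]_(d, k) :=
  \matrix_(i < d) (u *m b ^+ i).
Arguments krylov {F k} u b d.

Lemma form_entry (F : fieldType) m k l (X : 'M[F]_(k, m)) (G : 'M_m)
    (Y : 'M_(l, m)) i j :
  (X *m G *m Y^T) i j = (row i X *m G *m (row j Y)^T) 0 0.
Proof.
rewrite !mxE; apply: eq_bigr => r _; rewrite !mxE; congr (_ * _).
by apply: eq_bigr => r' _; rewrite !mxE.
Qed.

Section Krylov.
Variables (F : fieldType) (n : nat).
Implicit Types (b g : 'M[F]_n.+1) (u w : 'rV[F]_n.+1) (p q : {poly F}).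

Lemma krylov_mul b u d (c : 'rV_d) :
  c *m krylov u b d = u *m horner_mx b (rVpoly c).
Proof.
rewrite mulmx_sum_row [rVpoly c]poly_def rmorph_sum mulmx_sumr.
apply: eq_bigr => i _; rewrite valK /= linearZ /= rmorphXn /= horner_mx_X rowK.
by rewrite -scalemxAr.
Qed.

Lemma krylov_sub b u d p q : u *m horner_mx b p = 0 -> size p = d.+1 ->
  (u *m horner_mx b q <= krylov u b d)%MS.
Proof.
move=> up size_p; rewrite (divp_eq q p) mulrC rmorphD mulmxDr.
rewrite mulmx_hornerM up mul0mx add0r.
have size_r : (size (q %% p)%R <= d)%N.
  by rewrite -ltnS -size_p ltn_modp -size_poly_gt0 size_p.
by rewrite -(poly_rV_K size_r) -krylov_mul submxMl.
Qed.

Lemma krylov_stable b u d p : u *m horner_mx b p = 0 -> size p = d.+1 ->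
  stablemx (krylov u b d) b.
Proof.
move=> up size_p; apply/row_subP => i; rewrite row_mul rowK -mulmxA mulmxE -exprSr.
have -> : b ^+ i.+1 = horner_mx b ('X ^+ i.+1) by rewrite rmorphXn /= horner_mx_X.
exact: krylov_sub up size_p.
Qed.

Lemma krylov_free b u d p : size p = d.+1 -> ann_gen b u p ->
  row_free (krylov u b d).
Proof.
move=> size_p u_p; apply/inj_row_free => c; rewrite krylov_mul => /eqP.
rewrite u_p => p_c; have c0 : rVpoly c = 0.
  apply: contraTeq p_c => /dvdp_leq le_p_c; apply/negP => /le_p_c.
  by rewrite size_p ltnNge size_poly.
by apply/rowP => i; rewrite -[c]rVpolyK c0 !mxE coef0.
Qed.

Lemma krylov_intertwine b v u p d (C : 'M_d) : ann_gen b v p -> size p = d.+1 ->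
  krylov v b d *m b = C *m krylov v b d -> u *m horner_mx b p = 0 ->
  krylov u b d *m b = C *m krylov u b d.
Proof.
move=> v_p size_p vC up; apply/row_matrixP => i; rewrite !row_mul rowK krylov_mul.
have := congr1 (row i) vC; rewrite !row_mul rowK krylov_mul => vi.
set r := 'X ^+ i.+1 - rVpoly (row i C).
have horner_r (x : 'rV_n.+1) :
    x *m horner_mx b r = x *m b ^+ i *m b - x *m horner_mx b (rVpoly (row i C)).
  by rewrite rmorphB /= rmorphXn /= horner_mx_X mulmxBr exprSr -mulmxE mulmxA.
have p_r : p %| r by rewrite -v_p horner_r vi subrr.
by apply/eqP; rewrite -subr_eq0 -horner_r (ann_dvd up p_r).
Qed.

Lemma krylov_form_entry b c g u w d1 d2 i j :
  (krylov u b d1 *m g *m (krylov w c d2)^T) i j =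
  (u *m b ^+ i *m g *m c^T ^+ j *m w^T) 0 0.
Proof. by rewrite form_entry !rowK trmx_mul trmxX !mulmxA. Qed.

End Krylov.

(* A Hankel matrix (h (i + j)) whose anti-diagonal is 1 and which vanishes
   above it is invertible: reversing its columns makes it unitriangular. *)
Lemma hankel_unit (F : fieldType) d (h : nat -> F) :
  (forall k, (k < d)%N -> h k = (k == d.-1)%:R) ->
  \matrix_(i < d, j < d) h (i + j)%N \in unitmx.
Proof.
move=> h_low; set H := \matrix_(i, j) _.
pose s : 'S_d := perm (@rev_ord_inj d).
suff : col_perm s H \in unitmx by rewrite col_permE unitmx_mul => /andP [].
have rev_diag (i : 'I_d) : (i + (d - i.+1) = d.-1)%N by move: (ltn_ord i); lia.
have rev_upper (i j : 'I_d) : (i < j)%N -> (i + (d - j.+1) < d.-1)%N.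
  by move: (ltn_ord j); lia.
rewrite unitmxE det_trig.
  rewrite big1 ?unitr1 // => i _; rewrite !mxE permE /= rev_diag h_low ?eqxx //.
  by rewrite ltn_predL (leq_ltn_trans _ (ltn_ord i)).
apply/forallP => i; apply/forallP => j; apply/implyP => lt_ij.
rewrite !mxE permE /= h_low; first by rewrite ltn_eqF ?rev_upper.
rewrite (ltn_trans (rev_upper _ _ lt_ij)) //.
by rewrite ltn_predL (leq_ltn_trans _ (ltn_ord i)).
Qed.

Lemma congruence_sym (F : fieldType) k l (P : 'M[F]_(k, l)) (M : 'M_k) :
  row_free P -> (P^T *m M *m P)^T = P^T *m M *m P -> M^T = M.
Proof.
move=> P_free; rewrite !trmx_mul trmxK mulmxA => /(row_free_inj P_free) sym.
by apply: (row_free_inj P_free); apply: trmx_inj; rewrite !trmx_mul trmxK sym.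
Qed.

(* (ii) If a is cyclic (minimal = characteristic polynomial), every
   intertwiner g a = a^T g is symmetric: in a cyclic basis for a^T the form
   g becomes a Hankel matrix. *)
Lemma cyclic_intertwiner_sym (F : fieldType) n (a : 'M[F]_n.+1) :
  mxminpoly a = char_poly a -> forall g, g *m a = a^T *m g -> g^T = g.
Proof.
move=> min_char g ga; have [w w_gen] := cyclic_vector a^T.
have size_p : size (mxminpoly a^T) = n.+2.
  by rewrite mxminpoly_tr min_char size_char_poly.
have Q_free : row_free (krylov w a^T n.+1)^T.
  by rewrite row_free_unit unitmx_tr -row_free_unit (krylov_free size_p w_gen).
apply: (congruence_sym Q_free); rewrite trmxK; apply/matrixP => i j.
rewrite mxE !krylov_form_entry !trmxK -!(mulmxA w) -!intertwinerX //.
have expM k l : a ^+ k *m a ^+ l = a ^+ (k + l) by rewrite exprD mulmxE.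
by rewrite -!mulmxA !(mulmxA (a ^+ _)) !expM addnC.
Qed.

Lemma stablemx_conjmx (F : fieldType) m k (V : 'M[F]_(m, k)) (f : 'M_k) :
  stablemx V f -> V *m f = conjmx V f *m V.
Proof. by move=> Vf; rewrite mulmxKpV. Qed.

(* Splitting off the cyclic submodule generated by a vector v whose
   annihilator is the minimal polynomial: K spans it, and the kernel of the
   dual Krylov matrix Lt^T (Lt built from a vector phi dual to the last row
   of K) is an a-stable complement N. *)
Section CyclicSummand.
Variables (F : fieldType) (n : nat) (a : 'M[F]_n.+1) (v : 'rV[F]_n.+1).
Hypothesis v_gen : ann_gen a v (mxminpoly a).

Local Notation d := (degree_mxminpoly a).
Local Notation K := (krylov v a d).
Let e : 'rV[F]_d := \row_(j < d) ((j : nat) == d.-1)%:R.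
Let phi := e *m pinvmx K^T.
Local Notation Lt := (krylov phi a^T d).
Let H := K *m Lt^T.

Lemma summand_free : row_free K.
Proof. exact: krylov_free (size_mxminpoly a) v_gen. Qed.

Lemma summand_stable : stablemx K a.
Proof.
by apply: krylov_stable (size_mxminpoly a); rewrite mx_root_minpoly mulmx0.
Qed.

(* phi exists because K has full column rank d. *)
Lemma summand_dual : K *m phi^T = e^T.
Proof.
have e_K : (e <= K^T)%MS.
  by apply: submx_full; rewrite /row_full mxrank_tr (eqP summand_free).
by rewrite -[K]trmxK -trmx_mul mulmxKpV.
Qed.

Lemma dual_pairing (i : 'I_d) :
  (v *m a ^+ i *m phi^T) 0 0 = (i == d.-1 :> nat)%:R.
Proof.
by rewrite -(rowK (fun j : 'I_d => v *m a ^+ j) i) -row_mul summand_dual !mxE.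
Qed.

Lemma summand_form k : K *m a ^+ k *m Lt^T =
  \matrix_(i < d, j < d) (v *m a ^+ (i + k + j) *m phi^T) 0 0.
Proof.
apply/matrixP => i j; rewrite krylov_form_entry trmxK !mxE !exprD.
by rewrite -!mulmxE !mulmxA.
Qed.

Lemma summand_form_sym k : (K *m a ^+ k *m Lt^T)^T = K *m a ^+ k *m Lt^T.
Proof.
rewrite summand_form; apply/matrixP => i j; rewrite !mxE.
by have -> : (j + k + i = i + k + j)%N by lia.
Qed.

Lemma pairing_sym : H^T = H.
Proof. by have := summand_form_sym 0; rewrite expr0 mulmx1. Qed.

Lemma pairing_unit : H \in unitmx.
Proof.
have -> : H = \matrix_(i < d, j < d) (v *m a ^+ (i + j) *m phi^T) 0 0.
  have := summand_form 0; rewrite expr0 mulmx1 -/H => ->.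
  by apply/matrixP => i j; rewrite !mxE addn0.
apply: (@hankel_unit F d (fun l => (v *m a ^+ l *m phi^T) 0 0)) => l lt_ld.
exact: (dual_pairing (Ordinal lt_ld)).
Qed.

Lemma pairing_intertwine : conjmx K a *m H = H *m (conjmx K a)^T.
Proof.
have KaLt : conjmx K a *m H = K *m a ^+ 1 *m Lt^T.
  by rewrite /H mulmxA -stablemx_conjmx ?summand_stable // expr1.
by rewrite -[in RHS]pairing_sym -trmx_mul KaLt summand_form_sym.
Qed.

Local Notation N := (row_base (kermx Lt^T)).
Local Notation m := (\rank (kermx Lt^T)).

Lemma dual_stable : stablemx Lt a^T.
Proof.
apply: krylov_stable (size_mxminpoly a).
by rewrite horner_mx_tr mx_root_minpoly trmx0 mulmx0.
Qed.

Lemma complement_stable : stablemx N a.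
Proof.
rewrite stablemx_row_base; apply/sub_kermxP.
have aLt : a *m Lt^T = Lt^T *m (conjmx Lt a^T)^T.
  move/(congr1 trmx): (stablemx_conjmx dual_stable).
  by rewrite trmx_mul [in RHS]trmx_mul trmxK.
by rewrite -mulmxA aLt mulmxA mulmx_ker mul0mx.
Qed.

(* H invertible forces Lt^T to have rank d, so N has dimension n + 1 - d. *)
Lemma complement_dim : (d + m = n.+1)%N.
Proof.
have rank_Lt : \rank Lt^T = d.
  apply/eqP; rewrite eqn_leq rank_leq_col /=.
  by rewrite -{1}(mxrank_unit pairing_unit) mxrankM_maxr.
have le_dn : (d <= n.+1)%N by rewrite -(eqP summand_free) rank_leq_col.
by rewrite mxrank_ker rank_Lt subnKC.
Qed.

Lemma summand_complement_free : row_free (col_mx K N).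
Proof.
have capKN : (K :&: N = 0)%MS.
  apply/eqP; rewrite -submx0; apply/rV_subP => x; rewrite sub_capmx.
  case/andP => /submxP [y ->]; rewrite eq_row_base => /sub_kermxP.
  rewrite -mulmxA -/H => yH; have -> : y = 0.
    by rewrite -[y]mulmx1 -(mulmxV pairing_unit) mulmxA yH mul0mx.
  by rewrite mul0mx sub0mx.
rewrite /row_free -addsmxE mxrank_disjoint_sum // (eqP summand_free).
by rewrite (eqP (row_base_free _)).
Qed.

(* If N is nonzero, some nonzero Y carries the action of a on N to that on K:
   the Krylov matrix of any nonzero u in N obeys the recurrence of K. *)
Lemma complement_hom : (0 < m)%N ->
  exists2 Y : 'M_(d, m), Y != 0 & Y *m conjmx N a = conjmx K a *m Y.
Proof.
move=> m_gt0; pose u := row (Ordinal m_gt0) N.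
have u_nz : u != 0.
  apply: contraTneq (row_base_free (kermx Lt^T)) => u0; apply/row_freePn.
  by exists (Ordinal m_gt0); rewrite -/u u0 sub0mx.
have uKa : krylov u a d *m a = conjmx K a *m krylov u a d.
  apply: krylov_intertwine v_gen (size_mxminpoly a) _ _.
    exact: stablemx_conjmx summand_stable.
  by rewrite mx_root_minpoly mulmx0.
have uK_N : (krylov u a d <= N)%MS.
  apply/row_subP => i; rewrite rowK; elim: (i : nat) => [|k IHk].
    by rewrite expr0 mulmx1 row_sub.
  rewrite exprSr -mulmxE mulmxA.
  exact: submx_trans (submxMr a IHk) complement_stable.
have YN : krylov u a d *m pinvmx N *m N = krylov u a d by rewrite mulmxKpV.
exists (krylov u a d *m pinvmx N).
  apply: contra_neq u_nz => Y0.
  have := congr1 (row (Ordinal (mxminpoly_nonconstant a))) YN.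
  by rewrite Y0 mul0mx row0 rowK expr0 mulmx1 => <-.
apply: (row_free_inj (row_base_free (kermx Lt^T))).
rewrite -mulmxA -stablemx_conjmx ?complement_stable //.
by rewrite mulmxA YN uKa -mulmxA YN.
Qed.

Lemma cyclic_split : exists k l (B1 : 'M_(k, n.+1)) (B2 : 'M_(l, n.+1))
    (C : 'M_k) (D : 'M_l) (A : 'M_k),
  [/\ (k + l = n.+1)%N, k = degree_mxminpoly a, row_free (col_mx B1 B2),
      B1 *m a = C *m B1 & B2 *m a = D *m B2] /\
  [/\ A \in unitmx, A^T = A, A *m C = C^T *m A &
      (0 < l)%N -> exists2 X : 'M_(k, l), X != 0 & X *m D = C^T *m X].
Proof.
have HC : invmx H *m conjmx K a = (conjmx K a)^T *m invmx H.
  apply: (canRL (mulmxK pairing_unit)).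
  by rewrite -mulmxA pairing_intertwine mulmxA mulVmx ?pairing_unit // mul1mx.
exists d, m, K, N, (conjmx K a), (conjmx N a), (invmx H); split; split => //.
- exact: complement_dim.
- exact: summand_complement_free.
- exact: stablemx_conjmx summand_stable.
- exact: stablemx_conjmx complement_stable.
- by rewrite unitmx_inv pairing_unit.
- by rewrite trmx_inv pairing_sym.
move=> /complement_hom [Y Y_nz YD]; exists (invmx H *m Y).
  by apply: contra_neq Y_nz => HY0; rewrite -(mulKVmx pairing_unit Y) HY0 mulmx0.
by rewrite -mulmxA YD mulmxA HC -mulmxA.
Qed.

End CyclicSummand.

Section Assembly.
Variable F : fieldType.

Lemma congruence_unit k l (P : 'M[F]_(k, l)) (M : 'M_k) :
  k = l -> row_free P -> M \in unitmx -> P^T *m M *m P \in unitmx.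
Proof.
move=> kl P_free M_unit; rewrite -row_free_unit /row_free mxrankMfree //.
by rewrite -mxrank_tr trmx_mul trmxK mxrankMfree // mxrank_tr mxrank_unit // kl.
Qed.

Lemma congruence_intertwine k l (P : 'M[F]_(k, l)) (a : 'M_l) (B M : 'M_k) :
  P *m a = B *m P -> M *m B = B^T *m M ->
  P^T *m M *m P *m a = a^T *m (P^T *m M *m P).
Proof.
move=> Pa MB; rewrite -mulmxA Pa mulmxA -(mulmxA _ M) MB !mulmxA.
by rewrite -trmx_mul -Pa trmx_mul.
Qed.

Lemma block_intertwiner d m (C : 'M[F]_d) (D : 'M_m) (A : 'M_d)
    (X : 'M_(d, m)) (Z : 'M_m) :
  A *m C = C^T *m A -> X *m D = C^T *m X -> Z *m D = D^T *m Z ->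
  block_mx A X 0 Z *m block_mx C 0 0 D =
  (block_mx C 0 0 D)^T *m block_mx A X 0 Z.
Proof.
move=> AC XD ZD; rewrite tr_block_mx !trmx0 !mulmx_block.
by rewrite !mulmx0 !mul0mx !addr0 !add0r AC XD ZD.
Qed.

Lemma ublock_unit d m (A : 'M[F]_d) (X : 'M_(d, m)) (Z : 'M_m) :
  A \in unitmx -> Z \in unitmx -> block_mx A X 0 Z \in unitmx.
Proof. by rewrite !unitmxE det_ublock unitrM => -> ->. Qed.

Lemma block_diag_conj n d m (a : 'M[F]_n) (K : 'M_(d, n)) (N : 'M_(m, n)) C D :
  K *m a = C *m K -> N *m a = D *m N ->
  col_mx K N *m a = block_mx C 0 0 D *m col_mx K N.
Proof.
by move=> KC ND; rewrite mul_col_mx mul_block_col !mul0mx addr0 add0r KC ND.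
Qed.

Lemma sym_intertwiner_exists n (a : 'M[F]_n) :
  exists g, [/\ g \in unitmx, g^T = g & g *m a = a^T *m g].
Proof.
have [k] := ubnP n; elim: k n a => // k IHk [|n] a lt_nk.
  by exists 1%:M; rewrite unitmx1 trmx1; split=> //; apply/matrixP => -[].
have [v v_gen] := cyclic_vector a.
have [d [m [K [N [C [D [A [[dm def_d KN KC ND] [A_unit A_sym AC _]]]]]]]]] :=
  cyclic_split v_gen.
have [gD [gD_unit gD_sym gDD]] :
    exists g, [/\ g \in unitmx, g^T = g & g *m D = D^T *m g].
  apply: IHk; move: (mxminpoly_nonconstant a) lt_nk; rewrite -def_d; lia.
pose M := block_mx A 0 0 gD.
have MB : M *m block_mx C 0 0 D = (block_mx C 0 0 D)^T *m M.
  by apply: block_intertwiner => //; rewrite mul0mx mulmx0.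
exists ((col_mx K N)^T *m M *m col_mx K N); split.
- by apply: congruence_unit => //; apply: ublock_unit.
- by rewrite !trmx_mul trmxK tr_block_mx A_sym gD_sym !trmx0 mulmxA.
- exact: congruence_intertwine (block_diag_conj KC ND) MB.
Qed.

Lemma minpoly_full_degree n (a : 'M[F]_n.+1) :
  degree_mxminpoly a = n.+1 -> mxminpoly a = char_poly a.
Proof.
move=> deg_a; apply/eqP; rewrite -eqp_monic ?mxminpoly_monic ?char_poly_monic //.
rewrite -dvdp_size_eqp ?mxminpoly_dvd_char //.
by rewrite size_mxminpoly size_char_poly deg_a.
Qed.

(* (iii) If a is not cyclic, the complement N is nonzero and a nonzero
   off-diagonal block X yields a non-symmetric intertwiner. *)
Lemma nonsym_intertwiner_exists n (a : 'M[F]_n.+1) :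
  mxminpoly a != char_poly a ->
  exists g, [/\ g \in unitmx, g *m a = a^T *m g & g^T != g].
Proof.
move=> min_char; have [v v_gen] := cyclic_vector a.
have [d [m [K [N [C [D [A [[dm def_d KN KC ND] [A_unit _ AC hom]]]]]]]]] :=
  cyclic_split v_gen.
have m_gt0 : (0 < m)%N.
  rewrite lt0n; apply: contra min_char => /eqP m0; apply/eqP/minpoly_full_degree.
  by rewrite -def_d -dm m0 addn0.
have [X X_nz XD] := hom m_gt0.
have [gD [gD_unit _ gDD]] := sym_intertwiner_exists D.
pose M := block_mx A X 0 gD.
exists ((col_mx K N)^T *m M *m col_mx K N); split.
- by apply: congruence_unit => //; apply: ublock_unit.
- apply: congruence_intertwine (block_diag_conj KC ND) _.
  exact: block_intertwiner AC XD gDD.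
apply: contra_neq X_nz => /(congruence_sym KN).
by rewrite tr_block_mx => /eq_block_mx [_ X0 _ _]; rewrite -X0 trmx0.
Qed.

End Assembly.

Lemma conj_trE (F : fieldType) n (a g : 'M[F]_n.+1) : g \in unitmx ->
  (g *m a *m invmx g = a^T) <-> (g *m a = a^T *m g).
Proof. by move=> g_unit; split=> [<- | ->]; rewrite ?mulmxKV ?mulmxK. Qed.

Theorem mainTheorem3 (F : fieldType) (n : nat) (a : 'M[F]_n.+1) :
  [/\ (exists g : 'M[F]_n.+1,
         [/\ g \in unitmx, g *m a *m invmx g = a^T & g^T = g]),
      (mxminpoly a = char_poly a ->
         forall g : 'M[F]_n.+1, g \in unitmx -> g *m a *m invmx g = a^T -> g^T = g)
    & (mxminpoly a != char_poly a ->
         exists g : 'M[F]_n.+1,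
           [/\ g \in unitmx, g *m a *m invmx g = a^T & g^T != g])].
Proof.
split.
- have [g [g_unit g_sym ga]] := sym_intertwiner_exists a.
  by exists g; split; rewrite ?conj_trE.
- move=> min_char g g_unit /(conj_trE _ g_unit).
  exact: cyclic_intertwiner_sym min_char g.
- move=> /nonsym_intertwiner_exists [g [g_unit ga g_nsym]].
  by exists g; split; rewrite ?conj_trE.
Qed.
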